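(* A semiring $S$ is a nil-extension of a rectangular skew-ring if and only if $S$ is a completely Archimedean semiring and $E^+(S)$ is a subsemigroup of $(S,+)$.
   Context: A semiring $(S,+,\cdot)$ has two associative operations with $a(b+c)=ab+ac$, $(b+c)a=ba+ca$. $na$ denotes the $n$-fold sum of $a$. $E^+(S)$ is the set of additive idempotents. $a$ is additively regular if $a=a+x+a$ for some $x$; $a$ is completely regular if there is $x$ with $a=a+x+a$, $a+x=x+a$, $a(a+x)=a+x$; $S$ is quasi completely regular if for each $a$ some $na$ is completely regular. $\mathscr{J}^+$ is Green's $\mathscr{J}$-relation on $(S,+)$. For $a\in S$ let $m(a)$ be the least positive integer with $m(a)a$ additively regular; $a\,\mathscr{J}^{*^{+}}\,b$ iff $m(a)a\,\mathscr{J}^+\,m(b)b$. A completely Archimedean semiring is a quasi completely regular semiring with $\mathscr{J}^{*^{+}}=S\times S$. A completely simple semiring is a semiring all of whose elements are completely regular and with $\mathscr{J}^+=S\times S$. A rectangular skew-ring is a completely simple semiring $K$ with $E^+(K)$ a subsemigroup of $(K,+)$. $S$ is a nil-extension of a subsemiring $K$ if $K$ is a bi-ideal of $S$ (for $a\in K$, $x\in S$: $a+x,x+a,ax,xa\in K$) and for every $a\in S$ some $na\in K$. *)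

From Stdlib Require Import Arith.

Section SemiringDefs.
Context {T : Type} (add mul : T -> T -> T).

Definition is_semiring : Prop :=
  (forall a b c, add a (add b c) = add (add a b) c) /\
  (forall a b c, mul a (mul b c) = mul (mul a b) c) /\
  (forall a b c, mul a (add b c) = add (mul a b) (mul a c)) /\
  (forall a b c, mul (add b c) a = add (mul b a) (mul c a)).

(* n-fold sum n a, intended for n >= 1: nsum 1 a = a, nsum (k+1) a = nsum k a + a.
   (nsum 0 a = a is a junk value; it is never used, all uses require 0 < n.) *)
Fixpoint nsum (n : nat) (a : T) : T :=
  match n with
  | 0 => a
  | 1 => a
  | S k => add (nsum k a) a
  end.

(* All notions below are relative to a carrier predicate P : T -> Prop
   (a subsemiring); for T itself take P := fun _ => True. *)
Variable P : T -> Prop.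

Definition subsemiring : Prop :=
  forall a b, P a -> P b -> P (add a b) /\ P (mul a b).

Definition add_idem (e : T) : Prop := add e e = e.

Definition Eplus_subsemigroup : Prop :=
  forall e f, P e -> P f -> add_idem e -> add_idem f -> add_idem (add e f).

Definition add_regular (a : T) : Prop :=
  exists x, P x /\ a = add (add a x) a.

Definition completely_regular (a : T) : Prop :=
  exists x, P x /\ a = add (add a x) a /\ add a x = add x a /\
            mul a (add a x) = add a x.

Definition quasi_completely_regular : Prop :=
  forall a, P a -> exists n, 0 < n /\ completely_regular (nsum n a).

(* membership in the principal two-sided ideal P^1 + a + P^1 of (P,+) *)
Definition in_Jideal (a y : T) : Prop :=
  y = a \/ (exists u, P u /\ y = add u a) \/ (exists v, P v /\ y = add a v) \/
  (exists u v, P u /\ P v /\ y = add (add u a) v).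

Definition Jplus (a b : T) : Prop := forall y, in_Jideal a y <-> in_Jideal b y.

Definition is_m (a : T) (m : nat) : Prop :=
  0 < m /\ add_regular (nsum m a) /\
  (forall k, 0 < k -> k < m -> ~ add_regular (nsum k a)).

Definition Jstarplus (a b : T) : Prop :=
  exists m n, is_m a m /\ is_m b n /\ Jplus (nsum m a) (nsum n b).

Definition completely_archimedean : Prop :=
  quasi_completely_regular /\ (forall a b, P a -> P b -> Jstarplus a b).

Definition completely_simple : Prop :=
  (forall a, P a -> completely_regular a) /\ (forall a b, P a -> P b -> Jplus a b).

Definition rectangular_skew_ring : Prop :=
  subsemiring /\ completely_simple /\ Eplus_subsemigroup.

End SemiringDefs.

Definition full {S : Type} : S -> Prop := fun _ => True.

Definition nil_extension {S : Type} (add mul : S -> S -> S) (K : S -> Prop) : Prop :=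
  subsemiring add mul K /\
  (forall a x, K a -> K (add a x) /\ K (add x a) /\ K (mul a x) /\ K (mul x a)) /\
  (forall a, exists n, 0 < n /\ K (nsum add n a)).

From Stdlib Require Import Arith Lia Classical.

(* Forward: an element a = a + x + a satisfies a = a + n(x + a), which lies in the
   bi-ideal K once n(x + a) does; so K is exactly the set of additively regular
   elements of S, and complete regularity and the J-relation pass from K to S.
   Backward: take K to be the additively regular elements. As m(a) = 1 for regular a,
   complete Archimedeanity makes any two regular elements J-related in S; with quasi
   complete regularity this makes additive idempotents primitive, so g + S + g is a
   group with identity g for every idempotent g. Consequently K is a bi-ideal, each
   of its elements is completely regular with a witness in K, and K is completely
   simple. *)

Lemma exists_least_pos (Q : nat -> Prop) :
  (exists n, 0 < n /\ Q n) ->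
  exists m, 0 < m /\ Q m /\ forall k, 0 < k -> k < m -> ~ Q k.
Proof.
  intros [n [Hn HQ]].
  induction n as [n IH] using lt_wf_ind.
  destruct (classic (exists k, 0 < k /\ k < n /\ Q k)) as [(k & Hk & Hkn & HQk)|Hno].
  - exact (IH k Hkn Hk HQk).
  - exists n. split; [exact Hn|]. split; [exact HQ|].
    intros k Hk Hkn HQk. apply Hno. eauto.
Qed.

Section Semiring.
Variables (T : Type) (add mul : T -> T -> T).
Local Infix "+" := add.
Local Infix "*" := mul.
Local Notation regular := (add_regular add full).

Hypothesis addA : forall a b c, a + (b + c) = a + b + c.
Hypothesis mulDr : forall a b c, a * (b + c) = a * b + a * c.
Hypothesis mulDl : forall a b c, (b + c) * a = b * a + c * a.

Lemma nsum_S n a : 0 < n -> nsum add (S n) a = nsum add n a + a.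
Proof. intros Hn. destruct n; [lia | reflexivity]. Qed.

Lemma nsum_Sl n a : 0 < n -> nsum add (S n) a = a + nsum add n a.
Proof.
  induction n as [|n IH]; intros Hn; [lia|].
  destruct n as [|n]; [reflexivity|].
  rewrite (nsum_S (S (S n))) by lia. rewrite IH at 1 by lia.
  rewrite (nsum_S (S n)) by lia. now rewrite addA.
Qed.

Lemma nsum_addr_id b g : b + g = b -> forall n, 0 < n -> nsum add n b + g = nsum add n b.
Proof.
  intros Hb n. induction n as [|n IH]; intros Hn; [lia|].
  destruct n as [|n]; [exact Hb|].
  rewrite nsum_S by lia. now rewrite <- addA, Hb.
Qed.

Lemma nsum_addl_id b g : g + b = b -> forall n, 0 < n -> g + nsum add n b = nsum add n b.
Proof.
  intros Hb n. induction n as [|n IH]; intros Hn; [lia|].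
  destruct n as [|n]; [exact Hb|].
  rewrite nsum_Sl by lia. now rewrite addA, Hb.
Qed.

Lemma addr_nsum_id a c : a + c = a -> forall n, 0 < n -> a + nsum add n c = a.
Proof.
  intros Hc n. induction n as [|n IH]; intros Hn; [lia|].
  destruct n as [|n]; [exact Hc|].
  rewrite nsum_S, addA, IH by lia. exact Hc.
Qed.

Lemma nsum_idem t : t + t = t -> forall n, nsum add n t = t.
Proof.
  intros Ht n. induction n as [|n IH]; [reflexivity|].
  destruct n as [|n]; [reflexivity|].
  rewrite nsum_S, IH by lia. exact Ht.
Qed.

Lemma nsum_mulr a c n : nsum add n a * c = nsum add n (a * c).
Proof.
  induction n as [|n IH]; [reflexivity|].
  destruct n as [|n]; [reflexivity|].
  rewrite !nsum_S by lia. now rewrite mulDl, IH.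
Qed.

Lemma nsum_addr_factor n a z : 0 < n -> exists w, nsum add n a + z = a + w.
Proof.
  intros Hn. destruct n as [|[|n]]; [lia | now exists z |].
  exists (nsum add (S n) a + z). rewrite nsum_Sl by lia. now rewrite addA.
Qed.

Lemma nsum_addl_factor n a z : 0 < n -> exists w, z + nsum add n a = w + a.
Proof.
  intros Hn. destruct n as [|[|n]]; [lia | now exists z |].
  exists (z + nsum add (S n) a). rewrite nsum_S by lia. now rewrite addA.
Qed.

Lemma nsum_split e u v :
  e = u + v -> e + v = v -> forall n, 0 < n -> e = nsum add n u + nsum add n v.
Proof.
  intros Euv Ev n. induction n as [|n IH]; intros Hn; [lia|].
  destruct n as [|n]; [exact Euv|].
  rewrite (nsum_Sl (S n) u), (nsum_S (S n) v) by lia.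
  transitivity (u + (nsum add (S n) u + nsum add (S n) v) + v); [|now rewrite !addA].
  rewrite <- IH, <- addA, Ev by lia. exact Euv.
Qed.

Lemma idem_regular e : e + e = e -> regular e.
Proof. intros He. exists e. split; [exact I | now rewrite !He]. Qed.

Lemma completely_regular_regular P a : completely_regular add mul P a -> regular a.
Proof. intros (x & _ & Ex & _). exists x. split; [exact I | exact Ex]. Qed.

Lemma completely_regular_full P a :
  completely_regular add mul P a -> completely_regular add mul full a.
Proof. intros (x & _ & Hx). exists x. split; [exact I | exact Hx]. Qed.

Lemma regular_mulr a s : regular a -> regular (a * s).
Proof.
  intros [x [_ Ex]]. exists (x * s). split; [exact I|].
  rewrite Ex at 1. now rewrite !mulDl.
Qed.

Lemma regular_mull a s : regular a -> regular (s * a).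
Proof.
  intros [x [_ Ex]]. exists (s * x). split; [exact I|].
  rewrite Ex at 1. now rewrite !mulDr.
Qed.

Lemma in_Jideal_full P a y : in_Jideal add P a y -> in_Jideal add full a y.
Proof.
  intros [->|[(u & _ & ->)|[(v & _ & ->)|(u & v & _ & _ & ->)]]].
  - now left.
  - right; left. now exists u.
  - right; right; left. now exists v.
  - right; right; right. now exists u, v.
Qed.

Lemma in_Jideal_regular a x y :
  a = a + x + a -> in_Jideal add full a y -> exists u v, y = u + a + v.
Proof.
  intros Ex [->|[(u & _ & ->)|[(v & _ & ->)|(u & v & _ & _ & ->)]]].
  - exists (a + x), (x + a). rewrite addA, <- Ex. exact Ex.
  - exists u, (x + a). now rewrite addA, <- (addA u a x), <- addA, <- Ex.
  - exists (a + x), v. now rewrite <- Ex.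
  - now exists u, v.
Qed.

Lemma is_m_regular a m : regular a -> is_m add full a m -> m = 1.
Proof.
  intros Ha (Hm & _ & Hmin).
  destruct (Nat.eq_dec m 1) as [E|E]; [exact E|].
  exfalso. apply (Hmin 1); [lia | lia | exact Ha].
Qed.

Section NilExtension.
Variable K : T -> Prop.
Hypothesis K_nil : nil_extension add mul K.
Hypothesis K_rsr : rectangular_skew_ring add mul K.

Lemma regular_in_K a : regular a -> K a.
Proof.
  intros [x [_ Ex]].
  destruct K_nil as (_ & K_ideal & K_power).
  destruct (K_power (x + a)) as (n & Hn & Kn).
  assert (Ea : a + nsum add n (x + a) = a).
  { apply addr_nsum_id; [|exact Hn]. rewrite addA. symmetry. exact Ex. }
  rewrite <- Ea. apply (K_ideal _ a Kn).
Qed.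

Lemma K_regular a : K a -> regular a.
Proof.
  destruct K_rsr as (_ & [K_cr _] & _).
  intros Ka. exact (completely_regular_regular _ _ (K_cr a Ka)).
Qed.

Lemma Jplus_K_full p q y :
  K p -> K q -> Jplus add K p q -> in_Jideal add full p y -> in_Jideal add full q y.
Proof.
  intros Kp Kq Hpq Hy.
  assert (Hqp : in_Jideal add full q p) by (apply (in_Jideal_full K), Hpq; now left).
  destruct (K_regular q Kq) as [xq [_ Exq]].
  destruct (K_regular p Kp) as [xp [_ Exp]].
  destruct (in_Jideal_regular q xq p Exq Hqp) as (u & v & ->).
  destruct (in_Jideal_regular _ xp y Exp Hy) as (u' & v' & ->).
  right; right; right. exists (u' + u), (v + v'). now rewrite !addA.
Qed.

Lemma nil_extension_is_m a : exists m, is_m add full a m /\ K (nsum add m a).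
Proof.
  destruct (exists_least_pos (fun k => regular (nsum add k a))) as (m & Hm & Rm & Hmin).
  { destruct K_nil as (_ & _ & K_power). destruct (K_power a) as (n & Hn & Kn).
    exists n. split; [exact Hn | now apply K_regular]. }
  exists m. split; [exact (conj Hm (conj Rm Hmin)) | now apply regular_in_K].
Qed.

Lemma nil_extension_completely_archimedean : completely_archimedean add mul full.
Proof.
  destruct K_nil as (_ & _ & K_power). destruct K_rsr as (_ & [K_cr K_J] & _).
  split.
  - intros a _. destruct (K_power a) as (n & Hn & Kn).
    exists n. split; [exact Hn|]. exact (completely_regular_full _ _ (K_cr _ Kn)).
  - intros a b _ _.
    destruct (nil_extension_is_m a) as (m & Hm & Km).
    destruct (nil_extension_is_m b) as (n & Hn & Kn).
    exists m, n. split; [exact Hm | split; [exact Hn|]].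
    intros y. split; apply Jplus_K_full; auto.
Qed.

Lemma nil_extension_Eplus : Eplus_subsemigroup add full.
Proof.
  destruct K_rsr as (_ & _ & K_Eplus).
  intros e f _ _ He Hf.
  apply K_Eplus; try assumption; apply regular_in_K, idem_regular; assumption.
Qed.

End NilExtension.

Section CompletelyArchimedean.
Hypothesis qcr : quasi_completely_regular add mul full.
Hypothesis jstar : forall a b, full a -> full b -> Jstarplus add full a b.

Lemma regular_sandwich a b : regular a -> regular b -> exists u v, a = u + b + v.
Proof.
  intros Ha [x [_ Ex]].
  destruct (jstar a b I I) as (m & n & Hm & Hn & Hab).
  rewrite (is_m_regular a m Ha Hm), (is_m_regular b n (ex_intro _ x (conj I Ex)) Hn) in Hab.
  apply (in_Jideal_regular b x a Ex), Hab. now left.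
Qed.

(* k is the additive identity of the subgroup of (S,+) containing some multiple n a. *)
Lemma power_idempotent a : exists k,
  k + k = k /\ a * k = k /\ (exists w, k = a + w) /\ (exists w, k = w + a) /\
  (forall g, a + g = a -> k + g = k) /\ (forall g, g + a = a -> g + k = k) /\
  exists n, 0 < n /\ k + nsum add n a = nsum add n a.
Proof.
  destruct (qcr a I) as (n & Hn & z & _ & Ez & Hcomm & Hmul).
  assert (Hk : nsum add n a + z + (nsum add n a + z) = nsum add n a + z)
    by now rewrite addA, <- Ez.
  exists (nsum add n a + z). split; [exact Hk|]. split; [|split; [|split; [|split; [|split]]]].
  - assert (Hak : a * (nsum add n a + z) + a * (nsum add n a + z) = a * (nsum add n a + z))
      by now rewrite <- mulDr, Hk.
    rewrite <- (nsum_idem _ Hak n), <- nsum_mulr. exact Hmul.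
  - exact (nsum_addr_factor n a z Hn).
  - rewrite Hcomm. exact (nsum_addl_factor n a z Hn).
  - intros g Hg. now rewrite Hcomm, <- addA, (nsum_addr_id a g Hg n Hn).
  - intros g Hg. now rewrite addA, (nsum_addl_id a g Hg n Hn).
  - exists n. split; [exact Hn|]. symmetry. exact Ez.
Qed.

Lemma idempotent_primitive e h :
  e + e = e -> h + h = h -> e + h = h -> h + e = h -> e = h.
Proof.
  intros He Hh Heh Hhe.
  destruct (regular_sandwich e h (idem_regular e He) (idem_regular h Hh)) as (u & v & Euv).
  assert (Ee : e = (e + u + h) + (h + v + e)).
  { transitivity (e + (u + h + v) + e); [rewrite <- Euv; now rewrite !He|].
    rewrite !addA. now rewrite <- (addA (e + u) h h), Hh. }
  assert (Ev : e + (h + v + e) = h + v + e) by now rewrite !addA, Heh.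
  destruct (power_idempotent (e + u + h)) as (k & _ & _ & _ & _ & k_absr & _ & n & Hn & Hkn).
  assert (Hkh : k + h = k) by (apply k_absr; now rewrite <- addA, Hh).
  assert (Hke : k + e = e)
    by now rewrite (nsum_split _ _ _ Ee Ev n Hn), addA, Hkn.
  assert (Ehk : h = k).
  { transitivity (k + (e + h)); [now rewrite addA, Hke, Heh | now rewrite Heh, Hkh]. }
  rewrite <- Hke, <- Ehk. exact Hhe.
Qed.

Lemma idempotent_sandwich_unit g c : g + g = g ->
  (exists r, g + c + g + r = g) /\ (exists r, r + (g + c + g) = g).
Proof.
  intros Hg.
  assert (gb : g + (g + c + g) = g + c + g) by now rewrite !addA, Hg.
  assert (bg : g + c + g + g = g + c + g) by now rewrite <- addA, Hg.
  destruct (power_idempotent (g + c + g))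
    as (k & Hk & _ & [w Ew] & [w' Ew'] & k_absr & k_absl & _).
  assert (Egk : g = k) by (apply idempotent_primitive; auto).
  split; [exists w; rewrite <- Ew | exists w'; rewrite <- Ew']; symmetry; exact Egk.
Qed.

Lemma regular_addr_stable a x s : a = a + x + a -> exists t, a = a + s + t.
Proof.
  intros Ex.
  assert (Hf : x + a + (x + a) = x + a).
  { transitivity (x + (a + x + a)); [now rewrite !addA | now rewrite <- Ex]. }
  destruct (idempotent_sandwich_unit (x + a) (s + a) Hf) as [[r Hr] _].
  exists (a + r).
  transitivity (a + (x + a + (s + a) + (x + a) + r)).
  { rewrite Hr, addA. exact Ex. }
  transitivity (a + x + a + s + (a + x + a) + r); [now rewrite !addA|].
  now rewrite <- Ex, !addA.
Qed.

Lemma regular_addl_stable a x s : a = a + x + a -> exists t, a = t + s + a.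
Proof.
  intros Ex.
  assert (Hf : a + x + (a + x) = a + x) by now rewrite addA, <- Ex.
  destruct (idempotent_sandwich_unit (a + x) (a + s) Hf) as [_ [r Hr]].
  exists (r + a).
  transitivity (r + (a + x + (a + s) + (a + x)) + a); [rewrite Hr; exact Ex|].
  transitivity (r + (a + x + a) + s + (a + x + a)); [now rewrite !addA|].
  now rewrite <- Ex.
Qed.

Lemma regular_addr a s : regular a -> regular (a + s).
Proof.
  intros [x [_ Ex]]. destruct (regular_addr_stable a x s Ex) as [t Et].
  exists (t + x). split; [exact I|].
  transitivity (a + s + t + x + a + s); [now rewrite <- Et, <- Ex | now rewrite !addA].
Qed.

Lemma regular_addl a s : regular a -> regular (s + a).
Proof.
  intros [x [_ Ex]]. destruct (regular_addl_stable a x s Ex) as [t Et].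
  exists (x + t). split; [exact I|].
  transitivity (s + (a + x + (t + s + a))); [now rewrite <- Et, <- Ex | now rewrite !addA].
Qed.

Lemma regular_completely_regular a : regular a -> completely_regular add mul regular a.
Proof.
  intros [x [_ Ex]].
  destruct (power_idempotent a) as (k & Hk & Hmul & [w Ew] & [w' Ew'] & _).
  destruct (regular_addr_stable a x w Ex) as [t Et].
  destruct (regular_addl_stable a x w' Ex) as [t' Et'].
  rewrite <- Ew in Et. rewrite <- addA, <- Ew' in Et'.
  assert (Hka : k + a = a) by (rewrite Et at 1; rewrite addA, Hk; symmetry; exact Et).
  assert (Hak : a + k = a) by (rewrite Et' at 1; rewrite <- addA, Hk; symmetry; exact Et').
  assert (Hay : a + (k + w) = k) by (rewrite addA, Hak; symmetry; exact Ew).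
  assert (Hya : k + w + a = k).
  { rewrite Ew' at 1. rewrite <- (addA w' a w), <- Ew, <- addA, Hka. symmetry. exact Ew'. }
  exists (k + w). split; [|split; [|split]].
  - exists a. split; [exact I|]. now rewrite Hya, addA, Hk.
  - now rewrite Hay, Hka.
  - now rewrite Hay, Hya.
  - rewrite Hay. exact Hmul.
Qed.

Lemma regular_sandwich_regular a b : regular a -> regular b ->
  exists u v, regular u /\ regular v /\ a = u + b + v.
Proof.
  intros Ha Hb.
  destruct (regular_sandwich a b Ha Hb) as (u & v & Euv).
  pose proof Ha as [x [_ Ex]].
  exists (a + x + u), (v + (x + a)). split; [|split].
  - now apply regular_addr, regular_addr.
  - now apply regular_addl, regular_addl.
  - transitivity (a + x + (u + b + v) + (x + a)); [|now rewrite !addA].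
    rewrite <- Euv, addA, <- !Ex. reflexivity.
Qed.

Lemma regular_Jideal_incl a b y : regular a -> regular b ->
  in_Jideal add regular a y -> in_Jideal add regular b y.
Proof.
  intros Ha Hb Hy.
  destruct (regular_sandwich_regular a b Ha Hb) as (U & V & HU & HV & Ea).
  right; right; right.
  destruct Hy as [->|[(u & _ & ->)|[(v & _ & ->)|(u & v & _ & _ & ->)]]].
  - now exists U, V.
  - exists (u + U), V. split; [now apply regular_addl|]. split; [exact HV|].
    rewrite Ea. now rewrite !addA.
  - exists U, (V + v). split; [exact HU|]. split; [now apply regular_addr|].
    rewrite Ea. now rewrite !addA.
  - exists (u + U), (V + v). split; [now apply regular_addl|]. split; [now apply regular_addr|].
    rewrite Ea. now rewrite !addA.
Qed.

Lemma regular_subsemiring : subsemiring add mul regular.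
Proof. intros a b Ha _. split; [now apply regular_addr | now apply regular_mulr]. Qed.

Lemma regular_nil_extension : nil_extension add mul regular.
Proof.
  split; [exact regular_subsemiring|]. split.
  - intros a s Ha. split; [|split; [|split]].
    + now apply regular_addr.
    + now apply regular_addl.
    + now apply regular_mulr.
    + now apply regular_mull.
  - intros a. destruct (qcr a I) as (n & Hn & Hcr).
    exists n. split; [exact Hn|]. exact (completely_regular_regular _ _ Hcr).
Qed.

Lemma regular_rectangular_skew_ring :
  Eplus_subsemigroup add full -> rectangular_skew_ring add mul regular.
Proof.
  intros Eplus. split; [exact regular_subsemiring|]. split; [split|].
  - exact regular_completely_regular.
  - intros a b Ha Hb y. split; now apply regular_Jideal_incl.
  - intros e f _ _. apply Eplus; exact I.
Qed.

End CompletelyArchimedean.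
End Semiring.

Theorem theorem3p5 (S : Type) (add mul : S -> S -> S) :
  is_semiring add mul ->
  ((exists K : S -> Prop,
       nil_extension add mul K /\ rectangular_skew_ring add mul K)
   <->
   (completely_archimedean add mul full /\ Eplus_subsemigroup add full)).
Proof.
  intros (addA & _ & mulDr & mulDl). split.
  - intros (K & K_nil & K_rsr). split.
    + exact (nil_extension_completely_archimedean S add mul addA K K_nil K_rsr).
    + exact (nil_extension_Eplus S add mul addA K K_nil K_rsr).
  - intros [[qcr jstar] Eplus]. exists (add_regular add full). split.
    + now apply regular_nil_extension.
    + now apply regular_rectangular_skew_ring.
Qed.
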